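(* Let $n\ge 2$ and let $\mathsf u$ be a subword of $\bm\lambda_n$ with $u_1u_2\cdots u_{n(n-1)}=e$. Then $\operatorname{rot}(\mathsf u)$ also satisfies $\operatorname{rot}(\mathsf u)_1\cdots\operatorname{rot}(\mathsf u)_{n(n-1)}=e$.
   Context: $\widetilde S_n$ is the affine symmetric group (bijections $w:\mathbb Z\to\mathbb Z$ with $w(i+n)=w(i)+n$ and $\sum_{i=1}^nw(i)=\binom{n+1}2$, under composition), with simple reflections $s_i=(\!(i,i+1)\!)$ for $i\in\{0,\dots,n-1\}$, where $(\!(i,j)\!)$ swaps $i+kn$ and $j+kn$ for all $k\in\mathbb Z$. $\bm\lambda_n$ is the word $[s_0,s_1,\dots,s_{n-1}]$ repeated $n-1$ times; its $j$-th letter ($1\le j\le n(n-1)$) is $\sigma_j=s_{(j-1)\bmod n}$ with index in $\{0,\dots,n-1\}$. A subword is a sequence $\mathsf u=[u_1,\dots,u_{n(n-1)}]$ with each $u_j\in\{\sigma_j,e\}$ ($e$ the identity). The rotation $\operatorname{rot}(\mathsf u)$ is the subword whose $j$-th entry is $e$ if and only if the $(j-1)$-th entry of $\mathsf u$ is $e$, with indices taken cyclically modulo $n(n-1)$ (so the first entry of $\operatorname{rot}(\mathsf u)$ is a skip iff $u_{n(n-1)}=e$). *)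

From mathcomp Require Import all_boot all_order all_algebra.
Set Implicit Arguments. Unset Strict Implicit. Unset Printing Implicit Defensive.
Import GRing.Theory Num.Theory.
Local Open Scope ring_scope.

(* Affine permutations are represented by their underlying maps int -> int.
   s_i = ((i, i+1)) for i in {0,..,n-1}: swaps i+kn and i+1+kn for all k. *)
Definition sref (n i : nat) (x : int) : int :=
  let r := (x %% n%:Z)%Z in
  if r == i%:Z then x + 1
  else if r == ((i.+1 %% n)%N)%:Z then x - 1
  else x.

(* Length of the word lambda_n = [s_0,...,s_{n-1}] repeated n-1 times. *)
Definition wlen (n : nat) : nat := (n * n.-1)%N.

(* Its letter at 0-based position k (i.e. sigma_{k+1}) is s_{k mod n}. *)
Definition letter (n k : nat) : int -> int := sref n (k %% n).

(* A subword is encoded by b : nat -> bool, where b k = true iff the entry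
   at 0-based position k (k < wlen n) is the letter sigma_{k+1} (and false iff
   it is the identity e); values at k >= wlen n are irrelevant. *)
Definition subword_prod (n : nat) (b : nat -> bool) : int -> int :=
  foldr (fun k f => (if b k then letter n k else id) \o f) id (iota 0 (wlen n)).

Definition is_id (f : int -> int) : Prop := forall x, f x = x.

(* rot(u)_j is a skip iff u_{j-1} is a skip, indices cyclic mod n(n-1). *)
Definition rotw (n : nat) (b : nat -> bool) : nat -> bool :=
  fun k => b ((k + wlen n).-1 %% wlen n)%N.

From mathcomp Require Import all_boot all_order all_algebra zify.
Set Implicit Arguments.
Unset Strict Implicit.
Unset Printing Implicit Defensive.
Import GRing.Theory Num.Theory.
Local Open Scope ring_scope.

(* Let t be the translation x |-> x + 1. Since s_(i+1) = t s_i t^-1 (indices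
   mod n), each letter of lambda_n is the t-conjugate of the previous one, and,
   as n divides N = n(n-1), the first letter s_0 is also the t-conjugate of the
   last one s_(n-1). Hence the product of rot(u) is t (u_N u_1 ... u_(N-1)) t^-1.
   As u_N is e or a reflection, u_1 ... u_N = e gives u_N u_1 ... u_(N-1) = e. *)

Lemma modn_succ_neq (n i : nat) : (1 < n)%N -> (i < n)%N -> (i.+1 %% n)%N != i.
Proof.
move=> n_gt1 lt_in; have [eq_n|ne] := eqVneq i.+1 n.
  by rewrite eq_n modnn; lia.
by rewrite modn_small; lia.
Qed.

Lemma modz_pred_eq (n j : nat) (x : int) : (j < n)%N ->
  (((x - 1) %% n)%Z == j) = ((x %% n)%Z == (j.+1 %% n)%N).
Proof.
move=> lt_jn; rewrite -modz_nat -{1}(@modz_small j n); last by lia.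
by rewrite -(eqz_modDr 1) subrK -addn1 PoszD.
Qed.

Lemma sref_succ (n i : nat) (x : int) : (i < n)%N ->
  sref n (i.+1 %% n) x = sref n i (x - 1) + 1.
Proof.
move=> lt_in; have lt_jn : (i.+1 %% n < n)%N by rewrite ltn_pmod //; lia.
rewrite /sref (modz_pred_eq x lt_in) (modz_pred_eq x lt_jn).
by case: ifP; [|case: ifP]; rewrite subrK.
Qed.

Lemma sref_involutive (n i : nat) : (1 < n)%N -> (i < n)%N -> involutive (sref n i).
Proof.
move=> n_gt1 lt_in x; rewrite {2}/sref; case: ifP => [/eqP x_i | x_ni].
  have := modz_pred_eq (x + 1) lt_in; rewrite addrK x_i eqxx => /esym/eqP x1_j.
  by rewrite /sref x1_j eqz_nat (negbTE (modn_succ_neq n_gt1 lt_in)) eqxx addrK.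
case: ifP => [x_j | x_nj]; last by rewrite /sref x_ni x_nj.
by rewrite /sref (modz_pred_eq x lt_in) x_j subrK.
Qed.

Lemma letter_succ (n k : nat) (x : int) : (0 < n)%N ->
  letter n k.+1 x = letter n k (x - 1) + 1.
Proof. by move=> n_gt0; rewrite /letter -addn1 -modnDml addn1 sref_succ ?ltn_pmod. Qed.

Lemma letter_wlen (n : nat) : letter n (wlen n) = letter n 0.
Proof. by rewrite /letter /wlen modnMr mod0n. Qed.

Section WordComposition.

Variable T : Type.
Implicit Types (F G : nat -> T -> T) (s : seq nat).

Definition compw F s : T -> T := foldr (fun k f => F k \o f) id s.

Lemma compw_rcons F s k : compw F (rcons s k) =1 compw F s \o F k.
Proof. by move=> x; elim: s => //= j s ->. Qed.

Lemma compw_map F G (f : nat -> nat) (t t' : T -> T) s :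
  cancel t t' -> cancel t' t ->
  (forall k, k \in s -> F (f k) =1 t \o G k \o t') ->
  compw F (map f s) =1 t \o compw G s \o t'.
Proof.
move=> tK t'K; elim: s => [|k s IH] conj x /=; first by rewrite t'K.
rewrite IH => [|j s_j]; last by apply: conj; rewrite inE s_j orbT.
by rewrite conj ?mem_head //= tK.
Qed.

Lemma compw_rot_id F s k :
  involutive (F k) -> compw F (rcons s k) =1 id -> compw F (k :: s) =1 id.
Proof.
move=> Fk_inv word_id x /=.
by have := word_id (F k x); rewrite compw_rcons /= Fk_inv => ->.
Qed.

Lemma compw_iota_rot F m :
  F 0%N =1 F m.+1 -> compw F (iota 0 m.+1) =1 compw F (map S (m :: iota 0 m)).
Proof. by move=> F0 x; rewrite /= -[1%N]/(1 + 0)%N iotaDl F0. Qed.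

End WordComposition.

Definition subword_letter (n : nat) (b : nat -> bool) (k : nat) : int -> int :=
  if b k then letter n k else id.

Lemma subword_prodE (n : nat) (b : nat -> bool) :
  subword_prod n b = compw (subword_letter n b) (iota 0 (wlen n)).
Proof. by []. Qed.

Lemma subword_letter_involutive (n : nat) (b : nat -> bool) (k : nat) :
  (1 < n)%N -> involutive (subword_letter n b k).
Proof.
move=> n_gt1; rewrite /subword_letter; case: (b k) => // x.
by rewrite /letter sref_involutive // ltn_pmod //; lia.
Qed.

Lemma rotw_succ (n : nat) (b : nat -> bool) (k : nat) :
  (k < wlen n)%N -> rotw n b k.+1 = b k.
Proof. by move=> lt_kN; rewrite /rotw addSn /= modnDr modn_small. Qed.

Lemma rotw_wlen (n : nat) (b : nat -> bool) : rotw n b (wlen n) = rotw n b 0.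
Proof. by rewrite /rotw; case: (wlen n) => //= m; rewrite modnDr. Qed.

Lemma subword_letter_rotw_succ (n : nat) (b : nat -> bool) (k : nat) (x : int) :
  (0 < n)%N -> (k < wlen n)%N ->
  subword_letter n (rotw n b) k.+1 x = subword_letter n b k (x - 1) + 1.
Proof.
move=> n_gt0 lt_kN; rewrite /subword_letter rotw_succ //.
by case: (b k) => /=; [exact: letter_succ | rewrite subrK].
Qed.

Lemma subword_letter_rotw_wlen (n : nat) (b : nat -> bool) :
  subword_letter n (rotw n b) (wlen n) = subword_letter n (rotw n b) 0.
Proof. by rewrite /subword_letter rotw_wlen letter_wlen. Qed.

Theorem lemma5p6 (n : nat) (b : nat -> bool) :
  (2 <= n)%N -> is_id (subword_prod n b) -> is_id (subword_prod n (rotw n b)).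
Proof.
move=> n_gt1 b_id x; set N := wlen n.
have N_gt0 : (0 < N)%N by rewrite /N /wlen muln_gt0; lia.
have last_first_id : compw (subword_letter n b) (N.-1 :: iota 0 N.-1) =1 id.
  apply: compw_rot_id; first exact: subword_letter_involutive.
  rewrite -cats1 -[[:: N.-1]]/(iota (0 + N.-1) 1) -iotaD addn1 (prednK N_gt0).
  exact: b_id.
have shift_conj k : k \in N.-1 :: iota 0 N.-1 ->
    subword_letter n (rotw n b) k.+1 =1
    (fun y => y + 1) \o subword_letter n b k \o (fun y => y - 1).
  by rewrite inE mem_iota => lt_kN y; apply: subword_letter_rotw_succ; lia.
rewrite subword_prodE -/N -(prednK N_gt0) compw_iota_rot; last first.
  by move=> y; rewrite prednK // subword_letter_rotw_wlen.
by rewrite (compw_map (@addrK _ 1) (@subrK _ 1) shift_conj) /comp last_first_id subrK.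
Qed.
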